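(* Let $\Omega$ be a finite set, $\Lambda_0^\omega>0$ for $\omega\in\Omega$, and $\Lambda_m^\omega=m\Lambda_0^\omega$ for $m\in\mathbb{N}$. Fix $\beta>0$ and $\omega^{key}\in\Omega$, and let $n_m=\Lambda_m^{\omega^{key}}+\beta\sqrt{\Lambda_m^{\omega^{key}}}$. Then $\lim_{m\to\infty}\bar\alpha(n_m,\Lambda_m^{\omega^{key}})$ exists and lies in $(0,1)$; for every $\omega$ with $\Lambda_0^\omega>\Lambda_0^{\omega^{key}}$, $\lim_{m\to\infty}\bar\alpha(n_m,\Lambda_m^\omega)=1$; and for every $\omega$ with $\Lambda_0^\omega<\Lambda_0^{\omega^{key}}$, $\lim_{m\to\infty}\bar\alpha(n_m,\Lambda_m^\omega)=0$.
   Context: For $\lambda>0$ and real $n\ge 0$, the continuous Erlang-C function is $\bar\alpha(n,\lambda)=\min\Big\{1,\big[\lambda\int_0^\infty t e^{-\lambda t}(1+t)^{n-1}\,dt\big]^{-1}\Big\}$; for $n\ge\lambda$ the minimum is attained by the second term, for $n<\lambda$ it equals 1, and for integer $n>\lambda$ it equals the Erlang-C probability that an arriving customer waits in an $M/M/n$ queue with arrival rate $\lambda$ and service rate 1. *)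

From Stdlib Require Import Reals Lra ClassicalEpsilon List.
Open Scope R_scope.

Definition improper_integral_from (f : R -> R) (a l : R) : Prop :=
  (forall b, a <= b -> inhabited (Riemann_integrable f a b)) /\
  (forall eps, 0 < eps -> exists B, a <= B /\
     forall b (pr : Riemann_integrable f a b), B <= b -> Rabs (RiemannInt pr - l) < eps).

(* The value of the improper integral (chosen by classical description;
   it is unique whenever it exists). *)
Definition improper_int (f : R -> R) (a : R) : R :=
  epsilon (inhabits 0) (fun l => improper_integral_from f a l).

Definition erlang_integrand (n lambda : R) (t : R) : R :=
  t * exp (- lambda * t) * Rpower (1 + t) (n - 1).

Definition alpha_bar (n lambda : R) : R :=
  Rmin 1 (/ (lambda * improper_int (erlang_integrand n lambda) 0)).

(* Write I(n, l) for the improper integral of t e^{-l t} (1+t)^{n-1} over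
   [0, +oo), so that alpha_bar n l = min {1, 1 / (l I(n, l))}; we call
   l I(n, l) the load.  With base rate a = Lambda0(wkey), staffing
   n_m = m a + beta sqrt(m a) and arrival rate m b, the theorem reduces to
   the behaviour of the load as m -> +oo:
   - b > a: the integrand is below t e^{-(l-n+1) t}, so I <= 1/(l-n+1)^2 and
     the load is eventually <= 1, i.e. alpha_bar is eventually 1;
   - b < a: on a fixed window [c, c+h] the integrand grows like e^{m K}
     with K > 0, so the load tends to +oo and alpha_bar to 0;
   - b = a: with r = sqrt(m a) the substitution t = s / r turns the load into
     the integral of g_r(s) = s e^{-r s} (1+s/r)^{r^2+beta r-1}, which tends
     to G(s) = s e^{beta s - s^2/2} uniformly on compacts and is dominated by
     C e^{-s}; hence the load tends to L* = int_0^oo G > 1 and alpha_bar to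
     1/L*, which lies in (0, 1).
   The file collects elementary inequalities, facts on Riemann integrals over
   [0, +oo), the characterisation of the improper integral of a nonnegative
   continuous function as the supremum of its partial integrals, estimates on
   I(n, l), and then treats the three regimes in turn. *)

From Stdlib Require Import Reals Lra Psatz ClassicalEpsilon List.
From Coquelicot Require Import Coquelicot.
Open Scope R_scope.

Lemma exp_le_exp x y : x <= y -> exp x <= exp y.
Proof. intros [H| ->]; [left; now apply exp_increasing | lra]. Qed.

Lemma le_exp x : x <= exp x.
Proof. pose proof (exp_ineq1_le x); lra. Qed.

Lemma exp_neg_le x : 0 <= x -> exp (- x) <= 1 / (1 + x).
Proof.
  intros Hx. pose proof (exp_ineq1_le x). pose proof (exp_pos (- x)).
  assert (Hinv : exp x * exp (- x) = 1).
  { rewrite <- exp_plus, Rplus_opp_r. apply exp_0. }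
  apply Rmult_le_reg_l with (1 + x); [lra|].
  replace ((1 + x) * (1 / (1 + x))) with 1 by (field; lra). nra.
Qed.

Lemma exp_near_one u d : Rabs u <= d -> d <= 1/2 -> Rabs (exp u - 1) <= 2 * d.
Proof.
  intros Hu Hd. apply Rabs_le_between in Hu.
  pose proof (exp_ineq1_le u). pose proof (exp_ineq1_le (- d)). pose proof (exp_pos d).
  assert (exp u <= exp d) by (apply exp_le_exp; lra).
  assert (exp d * exp (- d) = 1) by (rewrite <- exp_plus, Rplus_opp_r; apply exp_0).
  assert (exp d <= 1 + 2 * d) by nra.
  apply Rabs_le. lra.
Qed.

Lemma ln_le_sub1 z : 0 < z -> ln z <= z - 1.
Proof.
  intros Hz. rewrite <- (ln_exp (z - 1)).
  apply ln_le; [lra|]. pose proof (exp_ineq1_le (z - 1)). lra.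
Qed.

Lemma ln1p_nonneg x : 0 <= x -> 0 <= ln (1 + x).
Proof. intros. rewrite <- ln_1. apply ln_le; lra. Qed.

Lemma ln1p_le x : 0 <= x -> ln (1 + x) <= x.
Proof. intros. pose proof (ln_le_sub1 (1 + x)). lra. Qed.

Lemma ex_derive_continuous_R (f : R -> R) x : ex_derive f x -> continuous f x.
Proof. exact (ex_derive_continuous f x). Qed.

Lemma ex_RInt_continuous_on (f : R -> R) a b : a <= b ->
  (forall x, a <= x <= b -> continuous f x) -> ex_RInt f a b.
Proof.
  intros Hab Hc. apply (ex_RInt_continuous (V:=R_CompleteNormedModule)).
  intros z Hz. rewrite Rmin_left, Rmax_right in Hz by lra. auto.
Qed.

Lemma RInt_FTC F dF a b : a <= b ->
  (forall x, a <= x <= b -> is_derive F x (dF x)) ->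
  (forall x, a <= x <= b -> continuous dF x) -> @eq R (RInt dF a b) (F b - F a).
Proof.
  intros Hab Hd Hc.
  assert (H : is_RInt dF a b (minus (F b) (F a))).
  { apply (is_RInt_derive (V:=R_CompleteNormedModule)); intros u Hu;
      rewrite Rmin_left, Rmax_right in Hu by lra; auto. }
  rewrite (is_RInt_unique _ _ _ _ H). reflexivity.
Qed.

Lemma nonneg_derivative_mono F dF a b : a <= b ->
  (forall u, a <= u <= b -> is_derive F u (dF u)) ->
  (forall u, a <= u <= b -> continuous dF u) ->
  (forall u, a < u < b -> 0 <= dF u) -> F a <= F b.
Proof.
  intros Hab Hd Hc Hp.
  assert (H : 0 <= RInt dF a b).
  { apply RInt_ge_0; auto. apply ex_RInt_continuous_on; auto. }
  rewrite (RInt_FTC F dF a b) in H; auto. lra.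
Qed.

Lemma ln1p_lower x : 0 <= x -> x - x^2/2 <= ln (1 + x).
Proof.
  intros Hx. set (F := fun u => ln (1 + u) - (u - u^2/2)).
  assert (H : F 0 <= F x).
  { apply (nonneg_derivative_mono F (fun u => u^2 / (1 + u))); auto.
    - intros u Hu. unfold F. auto_derive; [lra|]. field. lra.
    - intros u Hu. apply ex_derive_continuous_R. auto_derive. lra.
    - intros u Hu. apply Rle_mult_inv_pos; [nra|lra]. }
  unfold F in H. rewrite Rplus_0_r, ln_1 in H. lra.
Qed.

Lemma ln1p_upper x : 0 <= x -> ln (1 + x) <= x - x^2 / (2 * (1 + x)).
Proof.
  intros Hx. set (F := fun u => u - u^2 / (2 * (1 + u)) - ln (1 + u)).
  assert (H : F 0 <= F x).
  { apply (nonneg_derivative_mono F (fun u => u^2 / (2 * (1 + u)^2))); auto.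
    - intros u Hu. unfold F. auto_derive; [lra|]. field. lra.
    - intros u Hu. apply ex_derive_continuous_R. auto_derive. nra.
    - intros u Hu. apply Rle_mult_inv_pos; nra. }
  unfold F in H. rewrite Rplus_0_r, ln_1 in H.
  replace (0 - 0^2 / (2 * (1 + 0)) - 0) with 0 in H by field. lra.
Qed.

Definition continuous_nonneg (f : R -> R) : Prop := forall x, 0 <= x -> continuous f x.

Lemma ex_RInt_nonneg f a b : continuous_nonneg f -> 0 <= a -> a <= b -> ex_RInt f a b.
Proof. intros Hc Ha Hab. apply ex_RInt_continuous_on; auto. intros x Hx; apply Hc; lra. Qed.

Lemma RInt_split f a s b : continuous_nonneg f -> 0 <= a -> a <= s -> s <= b ->
  RInt f a b = RInt f a s + RInt f s b.
Proof.
  intros Hc Ha H1 H2. rewrite <- (RInt_Chasles (V:=R_CompleteNormedModule) f a s b); auto.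
  - apply ex_RInt_nonneg; auto; lra.
  - apply ex_RInt_nonneg; auto; lra.
Qed.

Lemma RInt_minus_R f g a b : ex_RInt f a b -> ex_RInt g a b ->
  @eq R (RInt f a b - RInt g a b) (RInt (fun x => f x - g x) a b).
Proof.
  intros Hf Hg. pose proof (RInt_minus (V:=R_CompleteNormedModule) f g a b Hf Hg) as H.
  unfold minus, plus, opp in H; simpl in H. symmetry. exact H.
Qed.

Lemma RInt_mono_upper f b0 b : continuous_nonneg f -> (forall x, 0 <= x -> 0 <= f x) ->
  0 <= b0 -> b0 <= b -> RInt f 0 b0 <= RInt f 0 b.
Proof.
  intros Hc Hp H0 H1. rewrite (RInt_split f 0 b0 b) by (auto; lra).
  assert (0 <= RInt f b0 b); [|lra].
  apply RInt_ge_0; auto; [apply ex_RInt_nonneg; auto; lra|]. intros; apply Hp; lra.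
Qed.

Lemma RInt_texp_le E c b : 0 < c -> 0 <= b -> 0 <= E ->
  RInt (fun t => E * (t * exp (- c * t))) 0 b <= E / c^2.
Proof.
  intros Hc Hb HE.
  rewrite (RInt_FTC (fun t => - E * (1 + c * t) * exp (- c * t) / c^2)); auto.
  - replace (- c * 0) with 0 by ring. rewrite exp_0.
    assert (0 <= E * (1 + c * b) * exp (- c * b) / c^2).
    { apply Rmult_le_pos; [apply Rmult_le_pos|left; apply Rinv_0_lt_compat; nra].
      - apply Rmult_le_pos; nra.
      - left; apply exp_pos. }
    replace (- E * (1 + c * b) * exp (- c * b) / c ^ 2 - - E * (1 + c * 0) * 1 / c ^ 2)
      with (E / c^2 - E * (1 + c * b) * exp (- c * b) / c^2) by (field; lra). lra.
  - intros x Hx. auto_derive; auto. field. lra.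
  - intros x Hx. apply ex_derive_continuous_R. auto_derive. auto.
Qed.

Lemma RInt_cexp_le C S T : S <= T -> 0 <= C ->
  RInt (fun s => C * exp (- s)) S T <= C * exp (- S).
Proof.
  intros H HC. rewrite (RInt_FTC (fun s => - C * exp (- s))); auto.
  - assert (0 <= C * exp (- T)) by (apply Rmult_le_pos; auto; left; apply exp_pos). lra.
  - intros x Hx. auto_derive; auto. ring.
  - intros x Hx. apply ex_derive_continuous_R. auto_derive. auto.
Qed.

Lemma RInt_gauss B : 0 <= B ->
  @eq R (RInt (fun s => s * exp (- s^2 / 2)) 0 B) (1 - exp (- B^2 / 2)).
Proof.
  intros H. rewrite (RInt_FTC (fun s => - exp (- s^2 / 2))); auto.
  - replace (- 0^2 / 2) with 0 by (simpl; lra). rewrite exp_0. ring.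
  - intros x Hx. auto_derive; auto.
    replace (- (x * (x * 1)) * / 2) with (- x ^ 2 / 2) by (unfold Rdiv; ring). field.
  - intros x Hx. apply ex_derive_continuous_R. auto_derive. auto.
Qed.

Lemma RInt_tail_le f C S : continuous_nonneg f -> (forall x, 0 <= x -> 0 <= f x) ->
  (forall s, 0 <= s -> f s <= C * exp (- s)) -> 0 <= C -> 0 <= S ->
  forall T, 0 <= T -> RInt f 0 T <= RInt f 0 S + C * exp (- S).
Proof.
  intros Hc Hp Hd HC HS T HT.
  assert (0 <= C * exp (- S)) by (apply Rmult_le_pos; auto; left; apply exp_pos).
  destruct (Rle_dec T S) as [HTS|HTS].
  - pose proof (RInt_mono_upper f T S Hc Hp HT HTS). lra.
  - rewrite (RInt_split f 0 S T) by (auto; lra).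
    assert (RInt f S T <= RInt (fun s => C * exp (- s)) S T).
    { apply RInt_le; [lra| apply ex_RInt_nonneg; auto; lra | |].
      - apply ex_RInt_continuous_on; [lra|]. intros z _.
        apply ex_derive_continuous_R. auto_derive. auto.
      - intros; apply Hd; lra. }
    pose proof (RInt_cexp_le C S T). lra.
Qed.

(** Improper integrals of nonnegative continuous functions. *)

Lemma improper_unique f a l1 l2 :
  improper_integral_from f a l1 -> improper_integral_from f a l2 -> l1 = l2.
Proof.
  intros [Hi1 H1] [_ H2].
  destruct (Req_dec l1 l2) as [|Hne]; auto. exfalso.
  set (e := Rabs (l1 - l2) / 2).
  assert (He : 0 < e) by (unfold e; assert (l1 - l2 <> 0) by lra;
                          pose proof (Rabs_pos_lt _ H); lra).
  destruct (H1 e He) as [B1 [HB1 HB1']]. destruct (H2 e He) as [B2 [HB2 HB2']].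
  set (b := Rmax B1 B2).
  assert (Hab : a <= b) by (apply Rle_trans with B1; auto; apply Rmax_l).
  destruct (Hi1 b Hab) as [pr].
  specialize (HB1' b pr (Rmax_l _ _)). specialize (HB2' b pr (Rmax_r _ _)).
  assert (Rabs (l1 - l2) <= Rabs (RiemannInt pr - l2) + Rabs (RiemannInt pr - l1)).
  { replace (l1 - l2) with ((RiemannInt pr - l2) - (RiemannInt pr - l1)) by ring.
    eapply Rle_trans; [apply Rabs_triang|]. rewrite Rabs_Ropp. lra. }
  unfold e in *. lra.
Qed.

Lemma improper_int_sup f : continuous_nonneg f -> (forall x, 0 <= x -> 0 <= f x) ->
  (exists M, forall b, 0 <= b -> RInt f 0 b <= M) ->
  (forall b, 0 <= b -> RInt f 0 b <= improper_int f 0) /\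
  (forall M, (forall b, 0 <= b -> RInt f 0 b <= M) -> improper_int f 0 <= M).
Proof.
  intros Hc Hp [M HM].
  set (E := fun y => exists b, 0 <= b /\ y = RInt f 0 b).
  destruct (completeness E) as [l [Hub Hl]].
  { exists M. intros y [b [Hb ->]]. auto. }
  { exists (RInt f 0 0), 0. split; auto; lra. }
  assert (Himp : improper_integral_from f 0 l).
  { split.
    - intros b Hb. constructor. apply ex_RInt_Reals_0. apply ex_RInt_nonneg; auto; lra.
    - intros eps Heps.
      assert (exists b0, 0 <= b0 /\ l - eps < RInt f 0 b0) as [b0 [Hb0 Hb0']].
      { apply NNPP. intros Hn. assert (l <= l - eps); [|lra].
        apply Hl. intros y [b [Hb ->]]. apply Rnot_lt_le. intros Hlt. apply Hn. eauto. }
      exists b0. split; auto. intros b pr Hb.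
      rewrite <- RInt_Reals.
      assert (RInt f 0 b0 <= RInt f 0 b) by (apply RInt_mono_upper; auto).
      assert (RInt f 0 b <= l) by (apply Hub; exists b; split; auto; lra).
      apply Rabs_def1; lra. }
  assert (Heq : improper_int f 0 = l).
  { apply (improper_unique f 0); [|exact Himp].
    apply (epsilon_spec (inhabits 0) (fun l => improper_integral_from f 0 l)). eauto. }
  rewrite Heq. split.
  - intros b Hb. apply Hub. exists b. split; auto.
  - intros M0 HM0. apply Hl. intros y [b [Hb ->]]. auto.
Qed.

Lemma improper_int_dominated f C : continuous_nonneg f -> (forall x, 0 <= x -> 0 <= f x) ->
  (forall s, 0 <= s -> f s <= C * exp (- s)) -> 0 <= C ->
  (forall b, 0 <= b -> RInt f 0 b <= improper_int f 0) /\
  (forall S, 0 <= S -> improper_int f 0 <= RInt f 0 S + C * exp (- S)).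
Proof.
  intros Hc Hp Hd HC.
  destruct (improper_int_sup f Hc Hp) as [Hlow Hup].
  { exists (RInt f 0 0 + C * exp (- 0)). apply RInt_tail_le; auto; lra. }
  split; auto. intros S HS. apply Hup. apply RInt_tail_le; auto.
Qed.

(** The Erlang integral I(n, l) = int_0^oo t e^{-l t} (1+t)^{n-1} dt. *)

Lemma erlang_integrand_exp n l t :
  erlang_integrand n l t = t * exp (- l * t) * exp ((n - 1) * ln (1 + t)).
Proof. reflexivity. Qed.

Lemma erlang_integrand_continuous n l : continuous_nonneg (erlang_integrand n l).
Proof.
  intros x Hx. apply ex_derive_continuous_R. unfold erlang_integrand, Rpower. auto_derive. lra.
Qed.

Lemma erlang_integrand_nonneg n l t : 0 <= t -> 0 <= erlang_integrand n l t.
Proof.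
  intros Ht. rewrite erlang_integrand_exp.
  apply Rmult_le_pos; [apply Rmult_le_pos|]; auto; left; apply exp_pos.
Qed.

(* Since ln(1+t) <= k(1+t) - 1 - ln k, half of the decay e^{-l t} absorbs the
   factor (1+t)^{n-1}: the partial integrals are bounded. *)
Lemma erlang_partial_bounded n l : 0 < l -> 1 < n ->
  exists M, forall b, 0 <= b -> RInt (erlang_integrand n l) 0 b <= M.
Proof.
  intros Hl Hn.
  set (k := l / (2 * (n - 1))).
  assert (Hk : 0 < k) by (unfold k; apply Rdiv_lt_0_compat; lra).
  set (K := l/2 - (n - 1) * (1 + ln k)).
  exists (exp K / (l/2)^2). intros b Hb.
  eapply Rle_trans; [|apply (RInt_texp_le (exp K) (l/2) b); auto; try lra; left; apply exp_pos].
  apply RInt_le; auto.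
  - apply ex_RInt_nonneg; [apply erlang_integrand_continuous | lra | lra].
  - apply ex_RInt_continuous_on; [lra|]. intros z _. apply ex_derive_continuous_R. auto_derive. auto.
  - intros t Ht. rewrite erlang_integrand_exp.
    assert (Hln : ln (1 + t) <= k * (1 + t) - 1 - ln k).
    { pose proof (ln_le_sub1 (k * (1 + t))). rewrite ln_mult in H by lra. nra. }
    assert (Hx : (n - 1) * ln (1 + t) <= l/2 * t + K).
    { unfold K. assert ((n - 1) * k = l/2) by (unfold k; field; lra). nra. }
    rewrite Rmult_assoc, <- exp_plus.
    replace (exp K * (t * exp (- (l/2) * t))) with (t * exp (K + - (l/2) * t))
      by (rewrite exp_plus; ring).
    apply Rmult_le_compat_l; [lra|]. apply exp_le_exp. lra.
Qed.

Lemma erlang_int_sup n l : 0 < l -> 1 < n ->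
  (forall b, 0 <= b -> RInt (erlang_integrand n l) 0 b <= improper_int (erlang_integrand n l) 0) /\
  (forall M, (forall b, 0 <= b -> RInt (erlang_integrand n l) 0 b <= M) ->
      improper_int (erlang_integrand n l) 0 <= M).
Proof.
  intros. apply improper_int_sup.
  - apply erlang_integrand_continuous.
  - intros; apply erlang_integrand_nonneg; auto.
  - apply erlang_partial_bounded; auto.
Qed.

Lemma erlang_int_pos n l : 0 < l -> 1 < n -> 0 < improper_int (erlang_integrand n l) 0.
Proof.
  intros Hl Hn. eapply Rlt_le_trans; [|apply (proj1 (erlang_int_sup n l Hl Hn) 1); lra].
  apply RInt_gt_0; [lra| |].
  - intros x Hx. rewrite erlang_integrand_exp.
    apply Rmult_lt_0_compat; [apply Rmult_lt_0_compat|]; [lra|apply exp_pos|apply exp_pos].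
  - intros x Hx. apply erlang_integrand_continuous. lra.
Qed.

(* Upper bound: (1+t)^{n-1} <= e^{(n-1) t}, so I(n, l) <= 1/(l - n + 1)^2. *)
Lemma erlang_int_upper n l : 0 < l -> 1 < n -> 0 < l - n + 1 ->
  improper_int (erlang_integrand n l) 0 <= 1 / (l - n + 1)^2.
Proof.
  intros Hl Hn Hc. set (c := l - n + 1) in *.
  apply (proj2 (erlang_int_sup n l Hl Hn)). intros B HB.
  eapply Rle_trans; [|eapply Rle_trans; [apply (RInt_texp_le 1 c B); auto; lra | right; field; lra]].
  apply RInt_le; auto.
  - apply ex_RInt_nonneg; [apply erlang_integrand_continuous | lra | lra].
  - apply ex_RInt_continuous_on; [lra|]. intros z _. apply ex_derive_continuous_R. auto_derive. auto.
  - intros t Ht. rewrite erlang_integrand_exp, Rmult_assoc, <- exp_plus, Rmult_1_l.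
    apply Rmult_le_compat_l; [lra|]. apply exp_le_exp.
    pose proof (ln1p_le t). pose proof (ln1p_nonneg t).
    assert ((n - 1) * ln (1 + t) <= (n - 1) * t) by (apply Rmult_le_compat_l; lra).
    unfold c. nra.
Qed.

(* Lower bound from the window [c, c + h], where the integrand is at least
   c e^{-l (c+h)} (1+c)^{n-1}. *)
Lemma erlang_int_window n l c h : 0 < l -> 1 < n -> 0 < c -> 0 < h ->
  h * c * exp (- l * (c + h) + (n - 1) * ln (1 + c)) <= improper_int (erlang_integrand n l) 0.
Proof.
  intros Hl Hn Hc Hh.
  eapply Rle_trans; [|apply (proj1 (erlang_int_sup n l Hl Hn) (c + h)); lra].
  set (f := erlang_integrand n l).
  assert (Hfc : continuous_nonneg f) by apply erlang_integrand_continuous.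
  rewrite (RInt_split f 0 c (c + h)) by (auto; lra).
  assert (0 <= RInt f 0 c).
  { apply RInt_ge_0; [lra| apply ex_RInt_nonneg; auto; lra |].
    intros; apply erlang_integrand_nonneg; lra. }
  set (v := c * exp (- l * (c + h) + (n - 1) * ln (1 + c))).
  assert (h * v <= RInt f c (c + h)); [|unfold v in *; lra].
  replace (h * v) with (RInt (fun _ => v) c (c + h))
    by (rewrite RInt_const; unfold scal; simpl; unfold mult; simpl; ring).
  apply RInt_le; [lra | apply ex_RInt_const | apply ex_RInt_nonneg; auto; lra |].
  intros t Ht. unfold f. rewrite erlang_integrand_exp, Rmult_assoc, <- exp_plus. unfold v.
  apply Rmult_le_compat; [lra | left; apply exp_pos | lra |]. apply exp_le_exp.
  assert (ln (1 + c) <= ln (1 + t)) by (apply ln_le; lra).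
  assert (- l * (c + h) <= - l * t) by nra. nra.
Qed.

Definition erlang_load (n l : R) : R := l * improper_int (erlang_integrand n l) 0.

Lemma min_inv_cv_one (x : nat -> R) :
  (exists N, forall m, (N <= m)%nat -> 0 < x m <= 1) -> Un_cv (fun m => Rmin 1 (/ x m)) 1.
Proof.
  intros [N HN] eps Heps. exists N. intros m Hm. destruct (HN m Hm) as [Hx0 Hx1].
  rewrite Rmin_left; [unfold Rdist; rewrite Rminus_diag, Rabs_R0; lra|].
  rewrite <- Rinv_1. apply Rinv_le_contravar; lra.
Qed.

Lemma min_inv_cv_zero (x : nat -> R) : cv_infty x -> Un_cv (fun m => Rmin 1 (/ x m)) 0.
Proof.
  intros Hx eps Heps. destruct (Hx (/ eps)) as [N HN]. exists N. intros m Hm.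
  specialize (HN m Hm). pose proof (Rinv_0_lt_compat eps Heps).
  assert (Hinv : / x m < eps).
  { rewrite <- (Rinv_inv eps). apply Rinv_lt_contravar; nra. }
  assert (0 <= Rmin 1 (/ x m)) by (apply Rmin_glb; [lra| left; apply Rinv_0_lt_compat; lra]).
  unfold Rdist. rewrite Rminus_0_r, Rabs_pos_eq by lra.
  eapply Rle_lt_trans; [apply Rmin_r | exact Hinv].
Qed.

(* Near a limit L > 1 the minimum is 1/x, which is 1-Lipschitz there. *)
Lemma min_inv_cv (x : nat -> R) L : 1 < L -> Un_cv x L -> Un_cv (fun m => Rmin 1 (/ x m)) (/ L).
Proof.
  intros HL Hx eps Heps.
  destruct (Hx (Rmin eps ((L - 1) / 2))) as [N HN]; [apply Rmin_glb_lt; lra|].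
  exists N. intros m Hm. specialize (HN m Hm). unfold Rdist in *.
  pose proof (Rmin_l eps ((L - 1) / 2)). pose proof (Rmin_r eps ((L - 1) / 2)).
  apply Rabs_def2 in HN as [HN1 HN2].
  assert (Hx1 : 1 < x m) by lra.
  rewrite Rmin_right by (left; rewrite <- Rinv_1; apply Rinv_lt_contravar; lra).
  replace (/ x m - / L) with ((L - x m) / (x m * L)) by (field; lra).
  assert (1 < x m * L) by nra.
  rewrite Rabs_div by nra. rewrite (Rabs_pos_eq (x m * L)) by nra.
  apply Rmult_lt_reg_r with (x m * L); [nra|].
  unfold Rdiv. rewrite Rmult_assoc, Rinv_l, Rmult_1_r by nra.
  apply Rabs_def1; nra.
Qed.

Definition staffing (a beta : R) (m : nat) : R := INR m * a + beta * sqrt (INR m * a).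

Lemma eventually_ge K : exists N, forall m, (N <= m)%nat -> K <= INR m.
Proof.
  destruct (INR_unbounded K) as [N HN]. exists N. intros m Hm. apply le_INR in Hm. lra.
Qed.

Lemma staffing_gt1 a beta M : 0 < a -> 0 <= beta -> 1/a + 1 <= M ->
  1 < M * a /\ 1 < M * a + beta * sqrt (M * a).
Proof.
  intros Ha Hb HM.
  assert (a * (1/a + 1) <= a * M) by (apply Rmult_le_compat_l; lra).
  replace (a * (1/a + 1)) with (1 + a) in H by (field; lra).
  pose proof (sqrt_pos (M * a)). split; nra.
Qed.

(** Rates b > a: the load stays at most 1, so alpha_bar is eventually 1. *)

Lemma overloaded_load_le_one a b beta : 0 < a -> a < b -> 0 < beta ->
  exists N, forall m, (N <= m)%nat -> 0 < erlang_load (staffing a beta m) (INR m * b) <= 1.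
Proof.
  intros Ha Hab Hbeta. set (d := b - a).
  destruct (eventually_ge (Rmax (1/a + 1) (4 * (beta^2 * a + b) / d^2))) as [N HN].
  exists N. intros m Hm. specialize (HN m Hm). unfold staffing.
  set (M := INR m) in *. set (s := sqrt (M * a)). set (n := M * a + beta * s).
  assert (HM1 : 1/a + 1 <= M) by (eapply Rle_trans; [apply Rmax_l | exact HN]).
  assert (HM2 : 4 * (beta^2 * a + b) <= M * d^2).
  { assert (H := Rle_trans _ _ _ (Rmax_r _ _) HN).
    apply Rmult_le_compat_r with (r := d^2) in H; [|nra].
    replace (4 * (beta^2 * a + b) / d^2 * d^2) with (4 * (beta^2 * a + b)) in H
      by (field; unfold d; lra). lra. }
  destruct (staffing_gt1 a beta M Ha (Rlt_le _ _ Hbeta) HM1) as [HMa Hn].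
  assert (Hss : s * s = M * a) by (apply sqrt_sqrt; lra).
  assert (Hs : 0 <= s) by apply sqrt_pos.
  assert (HM0 : 0 <= M) by (unfold M; apply pos_INR).
  assert (HMd : M * (4 * (beta^2 * a + b)) <= M * (M * d^2)) by (apply Rmult_le_compat_l; lra).
  assert (Hsq : beta * s <= M * d / 2).
  { assert (M * (4 * (beta^2 * a)) <= M * (M * d^2)) by nra.
    assert ((beta * s)^2 <= (M * d / 2)^2) by nra.
    assert (0 <= M * d / 2) by (unfold d; nra). nra. }
  assert (Hc : M * d / 2 + 1 <= M * b - n + 1) by (unfold n, d in *; lra).
  assert (Hl : 0 < M * b) by nra.
  assert (Hlc : M * b <= (M * b - n + 1)^2).
  { assert (0 <= M * d / 2) by (unfold d; nra).
    assert ((M * d / 2)^2 <= (M * b - n + 1)^2) by (apply pow_incr; lra). nra. }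
  pose proof (erlang_int_pos n (M * b) Hl Hn).
  pose proof (erlang_int_upper n (M * b) Hl Hn ltac:(nra)).
  unfold erlang_load. split; [nra|].
  apply Rle_trans with (M * b * (1 / (M * b - n + 1)^2)); [apply Rmult_le_compat_l; lra|].
  apply Rmult_le_reg_r with ((M * b - n + 1)^2); [nra|]. field_simplify; nra.
Qed.

(** Rates b < a: the load tends to +oo, so alpha_bar tends to 0. *)

Lemma underloaded_window a b : 0 < b < a ->
  exists c h, 0 < c /\ 0 < h /\ b * (c + h) < a * ln (1 + c).
Proof.
  intros Hab. set (c := (a - b) / a). set (h := c * (a - b) / (4 * b)).
  assert (Hc : 0 < c) by (unfold c; apply Rdiv_lt_0_compat; lra).
  assert (Hac : a * c = a - b) by (unfold c; field; lra).
  assert (Hbh : b * h = c * (a - b) / 4) by (unfold h; field; lra).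
  exists c, h. split; [|split]; [lra| unfold h; apply Rdiv_lt_0_compat; nra |].
  pose proof (ln1p_lower c (Rlt_le _ _ Hc)).
  assert (a * (c - c^2/2) <= a * ln (1 + c)) by (apply Rmult_le_compat_l; lra).
  nra.
Qed.

Lemma underloaded_load_infty a b beta : 0 < b < a -> 0 < beta ->
  cv_infty (fun m => erlang_load (staffing a beta m) (INR m * b)).
Proof.
  intros Hab Hbeta K.
  destruct (underloaded_window a b Hab) as [c [h [Hc [Hh Hrate]]]].
  set (L := ln (1 + c)).
  assert (HL : 0 <= L) by (apply ln1p_nonneg; lra).
  set (K1 := b * h * c * exp (- L)).
  assert (HK1 : 0 < K1).
  { unfold K1. pose proof (exp_pos (- L)). repeat apply Rmult_lt_0_compat; lra. }
  destruct (eventually_ge (Rmax (1/a + 1) (K / K1 + 1))) as [N HN].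
  exists N. intros m Hm. specialize (HN m Hm). unfold staffing, erlang_load.
  set (M := INR m) in *. set (n := M * a + beta * sqrt (M * a)).
  assert (HM1 : 1/a + 1 <= M) by (eapply Rle_trans; [apply Rmax_l | exact HN]).
  assert (HM2 : K / K1 + 1 <= M) by (eapply Rle_trans; [apply Rmax_r | exact HN]).
  destruct (staffing_gt1 a beta M ltac:(lra) (Rlt_le _ _ Hbeta) HM1) as [HMa Hn].
  assert (HM : 0 < M) by (assert (0 < 1/a) by (apply Rdiv_lt_0_compat; lra); lra).
  assert (Hl : 0 < M * b) by nra.
  pose proof (erlang_int_window n (M * b) c h Hl Hn Hc Hh) as Hwin. fold L in Hwin.
  assert (Hexp : - L <= - (M * b) * (c + h) + (n - 1) * L).
  { assert ((M * a - 1) * L <= (n - 1) * L)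
      by (apply Rmult_le_compat_r; [lra| unfold n; pose proof (sqrt_pos (M * a)); nra]).
    assert (0 <= M * (a * L - b * (c + h))) by (apply Rmult_le_pos; unfold L; lra). nra. }
  assert (HMK : M * K1 <= M * b * improper_int (erlang_integrand n (M * b)) 0).
  { apply Rle_trans with (M * b * (h * c * exp (- (M * b) * (c + h) + (n - 1) * L)));
      [| apply Rmult_le_compat_l; lra].
    replace (M * K1) with (M * b * (h * c * exp (- L))) by (unfold K1; ring).
    apply Rmult_le_compat_l; [lra|]. apply Rmult_le_compat_l; [nra|]. apply exp_le_exp; lra. }
  assert (K < M * K1); [|lra].
  apply Rmult_lt_reg_r with (/ K1); [apply Rinv_0_lt_compat; lra|].
  rewrite Rmult_assoc, Rinv_r, Rmult_1_r by lra. unfold Rdiv in HM2. lra.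
Qed.

(** The critical rate b = a: the Halfin-Whitt limit. *)

(* With l = r^2, n = r^2 + beta r and t = s / r, the scaled Erlang integrand
   r^2 t e^{-l t} (1+t)^{n-1} dt becomes g_r(s) ds. *)
Definition scaled_integrand (beta r s : R) : R :=
  s * exp (- r * s) * exp ((r * r + beta * r - 1) * ln (1 + s / r)).

(* The pointwise limit G(s) of g_r(s) as r -> +oo. *)
Definition limit_integrand (beta s : R) : R := s * exp (beta * s - s^2 / 2).

(* Both g_r (for r >= 4 beta + 8) and G are dominated by C_beta e^{-s}. *)
Definition tail_constant (beta : R) : R := exp ((beta + 2)^2).

Lemma tail_constant_pos beta : 0 < tail_constant beta.
Proof. apply exp_pos. Qed.

Lemma scaled_integrand_continuous beta r : 0 < r -> continuous_nonneg (scaled_integrand beta r).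
Proof.
  intros Hr x Hx. apply ex_derive_continuous_R. unfold scaled_integrand. auto_derive.
  assert (0 <= x / r) by (apply Rdiv_le_0_compat; lra). repeat split; lra.
Qed.

Lemma scaled_integrand_nonneg beta r s : 0 <= s -> 0 <= scaled_integrand beta r s.
Proof.
  intros. unfold scaled_integrand.
  apply Rmult_le_pos; [apply Rmult_le_pos|]; auto; left; apply exp_pos.
Qed.

Lemma limit_integrand_continuous beta : continuous_nonneg (limit_integrand beta).
Proof. intros x Hx. apply ex_derive_continuous_R. unfold limit_integrand. auto_derive. auto. Qed.

Lemma limit_integrand_nonneg beta s : 0 <= s -> 0 <= limit_integrand beta s.
Proof. intros. unfold limit_integrand. apply Rmult_le_pos; auto; left; apply exp_pos. Qed.

Lemma scaled_integrand_exp beta r s : scaled_integrand beta r s =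
  s * exp (- r * s + (r * r + beta * r - 1) * ln (1 + s / r)).
Proof. unfold scaled_integrand. rewrite exp_plus. ring. Qed.

(* The substitution t = s / r. *)
Lemma erlang_rescale beta r b : 0 < r -> 0 <= b ->
  @eq R (r * r * RInt (erlang_integrand (r * r + beta * r) (r * r)) 0 b)
        (RInt (scaled_integrand beta r) 0 (r * b)).
Proof.
  intros Hr Hb.
  set (f := erlang_integrand (r * r + beta * r) (r * r)).
  set (h := fun y => scal (/ r) (f (/ r * y + 0))).
  assert (Hlin := RInt_comp_lin (V:=R_CompleteNormedModule) f (/ r) 0 0 (r * b)).
  rewrite Rmult_0_r, !Rplus_0_r in Hlin.
  replace (/ r * (r * b)) with b in Hlin by (field; lra).
  specialize (Hlin (ex_RInt_nonneg f 0 b (erlang_integrand_continuous _ _) (Rle_refl 0) Hb)).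
  assert (Hh : ex_RInt h 0 (r * b)).
  { apply (ex_RInt_scal (V:=R_CompleteNormedModule)). apply ex_RInt_continuous_on; [nra|].
    intros z Hz. apply ex_derive_continuous_R. unfold f, erlang_integrand, Rpower. auto_derive.
    assert (0 <= / r * z) by (apply Rmult_le_pos; [left; apply Rinv_0_lt_compat|]; lra). lra. }
  assert (Hs := RInt_scal (V:=R_CompleteNormedModule) h 0 (r * b) (r * r) Hh).
  change (RInt (fun y => scal (/ r) (f (/ r * y + 0))) 0 (r * b)) with (RInt h 0 (r * b)) in Hlin.
  rewrite <- Hlin.
  change (@eq R (scal (r * r) (RInt h 0 (r * b))) (RInt (scaled_integrand beta r) 0 (r * b))).
  rewrite <- Hs. apply RInt_ext. intros x Hx. rewrite Rmin_left, Rmax_right in Hx by nra.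
  unfold h, f, scaled_integrand, erlang_integrand, Rpower, scal; simpl; unfold mult; simpl.
  replace (- (r * r) * (/ r * x + 0)) with (- r * x) by (field; lra).
  replace (/ r * x + 0) with (x / r) by (field; lra).
  field. lra.
Qed.

(* Domination of g_r: with x = s / r, the exponent is at most
   beta s - r^2 x^2/(2(1+x)), and this beats (beta + 2) s up to (beta+2)^2. *)
Lemma scaled_integrand_dominated beta r s : 0 < beta -> 4 * beta + 8 <= r -> 0 <= s ->
  scaled_integrand beta r s <= tail_constant beta * exp (- s).
Proof.
  intros Hb Hr Hs. rewrite scaled_integrand_exp. unfold tail_constant.
  set (x := s / r).
  assert (Hx : 0 <= x) by (unfold x; apply Rdiv_le_0_compat; lra).
  assert (Hsx : s = r * x) by (unfold x; field; lra).
  clearbody x.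
  pose proof (ln1p_upper x Hx) as U. pose proof (ln1p_le x Hx) as U2.
  pose proof (ln1p_nonneg x Hx) as N0.
  set (l := ln (1 + x)) in *. clearbody l.
  set (Q := x^2 / (2 * (1 + x))) in *.
  assert (HQ : Q * (2 * (1 + x)) = x^2) by (unfold Q; field; lra).
  assert (HQ0 : 0 <= Q) by (unfold Q; apply Rdiv_le_0_compat; nra).
  clearbody Q.
  assert (Hphi : - r * s + (r * r + beta * r - 1) * l <= beta * s - r * r * Q).
  { assert (r * r * l <= r * r * (x - Q)) by (apply Rmult_le_compat_l; nra).
    assert (beta * r * l <= beta * r * x) by (apply Rmult_le_compat_l; nra).
    rewrite Hsx. nra. }
  assert (Hkey : (beta + 2) * s - r * r * Q <= (beta + 2)^2).
  { destruct (Rle_dec x 1) as [Hx1|Hx1].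
    - assert (r * r * (4 * Q) >= r * r * x^2) by (apply Rmult_ge_compat_l; nra).
      assert (r * r * x^2 = s^2) by (rewrite Hsx; ring).
      pose proof (pow2_ge_0 (s / 2 - (beta + 2))). nra.
    - assert (r * r * (4 * Q) >= r * r * x) by (apply Rmult_ge_compat_l; nra).
      assert (r * r * x = r * s) by (rewrite Hsx; ring).
      assert ((beta + 2) * s <= r * s / 4) by nra. nra. }
  eapply Rle_trans; [apply Rmult_le_compat_r; [left; apply exp_pos | apply le_exp]|].
  rewrite <- !exp_plus. apply exp_le_exp. lra.
Qed.

Lemma limit_integrand_dominated beta s : 0 < beta -> 0 <= s ->
  limit_integrand beta s <= tail_constant beta * exp (- s).
Proof.
  intros Hb Hs. unfold limit_integrand, tail_constant.
  eapply Rle_trans; [apply Rmult_le_compat_r; [left; apply exp_pos | apply le_exp]|].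
  rewrite <- !exp_plus. apply exp_le_exp. nra.
Qed.

(* On [0, S] the exponent of g_r is that of G up to D_S / r, by the
   third-order bounds on ln(1+x). *)
Lemma scaled_exponent_error beta r s S : 0 < beta -> 1 <= r -> 0 <= s <= S ->
  Rabs ((- r * s + (r * r + beta * r - 1) * ln (1 + s / r)) - (beta * s - s^2 / 2))
    <= (S^3/2 + beta * S^2/2 + S) / r.
Proof.
  intros Hb Hr Hs.
  set (x := s / r).
  assert (Hx : 0 <= x) by (unfold x; apply Rdiv_le_0_compat; lra).
  assert (Hsx : s = r * x) by (unfold x; field; lra).
  clearbody x.
  pose proof (ln1p_upper x Hx) as U. pose proof (ln1p_nonneg x Hx) as N0.
  pose proof (ln1p_le x Hx) as U2. pose proof (ln1p_lower x Hx) as Lo.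
  set (l := ln (1 + x)) in *. clearbody l.
  assert (U3 : l <= x - x^2/2 + x^3/2).
  { assert (x^2 / (2 * (1 + x)) >= x^2/2 - x^3/2); [|lra].
    apply Rle_ge. apply Rmult_le_reg_r with (2 * (1 + x)); [nra|].
    replace (x^2 / (2 * (1 + x)) * (2 * (1 + x))) with (x^2) by (field; lra). nra. }
  apply Rmult_le_reg_l with r; [lra|].
  rewrite <- (Rabs_pos_eq r) at 1 by lra. rewrite <- Rabs_mult.
  replace (r * ((S^3/2 + beta * S^2/2 + S) / r)) with (S^3/2 + beta * S^2/2 + S) by (field; lra).
  replace (r * (- r * s + (r * r + beta * r - 1) * l - (beta * s - s^2/2)))
    with (r * r * r * (l - x + x^2/2) + beta * r * r * (l - x) - r * l) by (rewrite Hsx; field).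
  assert (s^3 <= S^3) by (apply pow_incr; lra).
  assert (s^2 <= S^2) by (apply pow_incr; lra).
  assert (r * r * r * (l - x + x^2/2) <= r * r * r * (x^3/2)) by (apply Rmult_le_compat_l; [nra|lra]).
  assert (0 <= r * r * r * (l - x + x^2/2)) by (apply Rmult_le_pos; [nra|lra]).
  assert (beta * r * r * (- x^2/2) <= beta * r * r * (l - x)) by (apply Rmult_le_compat_l; [nra|lra]).
  assert (beta * r * r * (l - x) <= 0) by (assert (0 <= beta * r * r) by nra; nra).
  assert (r * l <= r * x) by (apply Rmult_le_compat_l; lra).
  assert (0 <= r * l) by nra.
  assert (r * r * r * (x^3/2) = s^3/2) by (rewrite Hsx; field).
  assert (beta * r * r * (- x^2/2) = - beta * s^2/2) by (rewrite Hsx; field).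
  apply Rabs_le. nra.
Qed.

Lemma scaled_integrand_close beta r s S : 0 < beta -> 1 <= r -> 0 <= s <= S ->
  (S^3/2 + beta * S^2/2 + S) / r <= 1/2 ->
  Rabs (scaled_integrand beta r s - limit_integrand beta s)
    <= S * exp (beta * S) * (2 * ((S^3/2 + beta * S^2/2 + S) / r)).
Proof.
  intros Hb Hr Hs HD. rewrite scaled_integrand_exp. unfold limit_integrand.
  set (u := (- r * s + (r * r + beta * r - 1) * ln (1 + s / r)) - (beta * s - s^2/2)).
  replace (s * exp (- r * s + (r * r + beta * r - 1) * ln (1 + s / r)) - s * exp (beta * s - s^2/2))
    with (s * exp (beta * s - s^2/2) * (exp u - 1))
    by (unfold u; rewrite Rmult_minus_distr_l, Rmult_1_r, Rmult_assoc, <- exp_plus;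
        f_equal; f_equal; f_equal; ring).
  rewrite Rabs_mult. apply Rmult_le_compat; try apply Rabs_pos.
  - rewrite Rabs_pos_eq by (apply Rmult_le_pos; [lra|left; apply exp_pos]).
    apply Rmult_le_compat; try lra; [left; apply exp_pos|]. apply exp_le_exp. nra.
  - apply exp_near_one; auto. apply scaled_exponent_error; auto.
Qed.

Lemma partial_integrals_close beta S eps : 0 < beta -> 0 <= S -> 0 < eps ->
  exists R0, forall r, R0 <= r ->
  Rabs (RInt (scaled_integrand beta r) 0 S - RInt (limit_integrand beta) 0 S) < eps.
Proof.
  intros Hb HS Heps.
  set (D := S^3/2 + beta * S^2/2 + S). set (E := S * (S * exp (beta * S))).
  assert (HD : 0 <= D) by (unfold D; assert (0 <= S^3) by (apply pow_le; lra); nra).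
  assert (HE : 0 <= E) by (unfold E; pose proof (exp_pos (beta * S)); nra).
  exists (Rmax 1 (Rmax (2 * D) (2 * E * D / eps + 1))). intros r Hr.
  pose proof (Rle_trans _ _ _ (Rmax_l _ _) Hr) as Hr1.
  pose proof (Rle_trans _ _ _ (Rle_trans _ _ _ (Rmax_l _ _) (Rmax_r _ _)) Hr) as Hr2.
  pose proof (Rle_trans _ _ _ (Rle_trans _ _ _ (Rmax_r _ _) (Rmax_r _ _)) Hr) as Hr3.
  assert (HDr : D / r <= 1/2).
  { apply Rmult_le_reg_l with r; [lra|]. replace (r * (D / r)) with D by (field; lra). lra. }
  assert (Hex1 := ex_RInt_nonneg _ 0 S (scaled_integrand_continuous beta r ltac:(lra)) (Rle_refl 0) HS).
  assert (Hex2 := ex_RInt_nonneg _ 0 S (limit_integrand_continuous beta) (Rle_refl 0) HS).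
  rewrite (RInt_minus_R _ _ 0 S Hex1 Hex2).
  eapply Rle_lt_trans.
  { apply abs_RInt_le_const; [lra| apply (ex_RInt_minus (V:=R_NormedModule)); auto |].
    intros t Ht. apply (scaled_integrand_close beta r t S); auto; lra. }
  fold D. replace ((S - 0) * (S * exp (beta * S) * (2 * (D / r)))) with (2 * E * D / r)
    by (unfold E; field; lra).
  apply Rmult_lt_reg_l with (r / eps); [apply Rdiv_lt_0_compat; lra|].
  replace (r / eps * (2 * E * D / r)) with (2 * E * D / eps) by (field; lra).
  replace (r / eps * eps) with r by (field; lra). lra.
Qed.

Definition limit_load (beta : R) : R := improper_int (limit_integrand beta) 0.

Lemma limit_load_bounds beta : 0 < beta ->
  (forall b, 0 <= b -> RInt (limit_integrand beta) 0 b <= limit_load beta) /\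
  (forall S, 0 <= S ->
     limit_load beta <= RInt (limit_integrand beta) 0 S + tail_constant beta * exp (- S)).
Proof.
  intros Hb. apply improper_int_dominated.
  - apply limit_integrand_continuous.
  - intros; apply limit_integrand_nonneg; auto.
  - intros; apply limit_integrand_dominated; auto.
  - left; apply tail_constant_pos.
Qed.

(* L* > 1 = int_0^oo s e^{-s^2/2} ds, the drift beta adding a definite
   amount already on [0, 1]. *)
Lemma limit_load_gt1 beta : 0 < beta -> 1 < limit_load beta.
Proof.
  intros Hb. destruct (limit_load_bounds beta Hb) as [Hlow _].
  set (g0 := fun s => s * exp (- s^2 / 2)).
  assert (Hg0c : continuous_nonneg g0)
    by (intros x _; apply ex_derive_continuous_R; unfold g0; auto_derive; auto).
  set (G := limit_integrand beta).
  assert (HGc : continuous_nonneg G) by apply limit_integrand_continuous.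
  assert (Hlt : RInt g0 0 1 < RInt G 0 1).
  { apply RInt_lt; [lra | intros; apply HGc; lra | intros; apply Hg0c; lra |].
    intros x Hx. unfold g0, G, limit_integrand. apply Rmult_lt_compat_l; [lra|].
    apply exp_increasing. nra. }
  set (d := RInt G 0 1 - RInt g0 0 1).
  assert (Hd : 0 < d) by (unfold d; lra).
  set (B := 2 / d + 2).
  assert (HB : 1 <= B) by (unfold B; assert (0 < 2 / d) by (apply Rdiv_lt_0_compat; lra); lra).
  assert (H1 : RInt G 0 B >= 1 - exp (- B^2 / 2) + d).
  { rewrite (RInt_split G 0 1 B) by (auto; lra).
    assert (RInt g0 1 B <= RInt G 1 B).
    { apply RInt_le; [lra | apply ex_RInt_nonneg; auto; lra | apply ex_RInt_nonneg; auto; lra |].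
      intros x Hx. unfold g0, G, limit_integrand. apply Rmult_le_compat_l; [lra|].
      apply exp_le_exp. nra. }
    assert (Hg : @eq R (RInt g0 0 B) (1 - exp (- B^2 / 2))) by (apply RInt_gauss; lra).
    rewrite (RInt_split g0 0 1 B) in Hg by (auto; lra).
    unfold d. lra. }
  assert (H2 : exp (- B^2 / 2) < d / 2).
  { replace (- B^2 / 2) with (- (B^2 / 2)) by field.
    eapply Rle_lt_trans; [apply exp_neg_le; nra|].
    apply Rmult_lt_reg_l with (1 + B^2 / 2); [nra|].
    replace ((1 + B^2 / 2) * (1 / (1 + B^2 / 2))) with 1 by (field; nra).
    assert (d / 2 * B = 1 + d) by (unfold B; field; lra). nra. }
  specialize (Hlow B ltac:(lra)). fold G in Hlow. lra.
Qed.

Lemma rescaled_load_bounds beta r S : 0 < beta -> 4 * beta + 8 <= r -> 0 <= S ->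
  RInt (scaled_integrand beta r) 0 S <= erlang_load (r * r + beta * r) (r * r) /\
  erlang_load (r * r + beta * r) (r * r)
    <= RInt (scaled_integrand beta r) 0 S + tail_constant beta * exp (- S).
Proof.
  intros Hb Hr HS.
  assert (Hr0 : 0 < r) by lra.
  destruct (erlang_int_sup (r * r + beta * r) (r * r) ltac:(nra) ltac:(nra)) as [Hlow Hup].
  unfold erlang_load.
  set (I := improper_int (erlang_integrand (r * r + beta * r) (r * r)) 0) in *.
  pose proof (tail_constant_pos beta) as HC.
  split.
  - assert (Hb0 : 0 <= S / r) by (apply Rdiv_le_0_compat; lra).
    pose proof (erlang_rescale beta r (S / r) Hr0 Hb0) as E.
    replace (r * (S / r)) with S in E by (field; lra).
    rewrite <- E. apply Rmult_le_compat_l; [nra|]. apply Hlow; auto.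
  - assert (I <= (RInt (scaled_integrand beta r) 0 S + tail_constant beta * exp (- S)) / (r * r)).
    { apply Hup. intros b Hb0.
      apply Rmult_le_reg_l with (r * r); [nra|].
      replace (r * r * ((RInt (scaled_integrand beta r) 0 S + tail_constant beta * exp (- S)) / (r * r)))
        with (RInt (scaled_integrand beta r) 0 S + tail_constant beta * exp (- S)) by (field; lra).
      rewrite (erlang_rescale beta r b Hr0 Hb0).
      apply RInt_tail_le; try lra; [apply scaled_integrand_continuous; lra | | | nra].
      - intros; apply scaled_integrand_nonneg; auto.
      - intros; apply scaled_integrand_dominated; auto. }
    apply Rmult_le_compat_l with (r := r * r) in H; [|nra].
    replace (r * r * ((RInt (scaled_integrand beta r) 0 S + tail_constant beta * exp (- S)) / (r * r)))
      with (RInt (scaled_integrand beta r) 0 S + tail_constant beta * exp (- S)) in H by (field; lra).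
    exact H.
Qed.

(* Choosing S with C e^{-S} < eps/3 and then r large: the rescaled load
   converges to L* as r -> +oo. *)
Lemma rescaled_load_cv beta eps : 0 < beta -> 0 < eps ->
  exists R0, 0 <= R0 /\ forall r, R0 <= r ->
  Rabs (erlang_load (r * r + beta * r) (r * r) - limit_load beta) < eps.
Proof.
  intros Hb Heps.
  pose proof (tail_constant_pos beta) as HC. set (C := tail_constant beta) in *.
  set (S := 3 * C / eps).
  assert (HS : 0 < S) by (unfold S; apply Rdiv_lt_0_compat; lra).
  assert (HCS : C * exp (- S) < eps / 3).
  { assert (C * exp (- S) <= C * (1 / (1 + S)))
      by (apply Rmult_le_compat_l; [lra | apply exp_neg_le; lra]).
    assert (C * (1 / (1 + S)) < eps / 3); [|lra].
    apply Rmult_lt_reg_l with (1 + S); [lra|].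
    replace ((1 + S) * (C * (1 / (1 + S)))) with C by (field; lra).
    assert (S * eps = 3 * C) by (unfold S; field; lra). nra. }
  destruct (partial_integrals_close beta S (eps / 3) Hb ltac:(lra) ltac:(lra)) as [R1 HR1].
  exists (Rmax (4 * beta + 8) R1). split; [eapply Rle_trans; [|apply Rmax_l]; lra|].
  intros r Hr.
  destruct (rescaled_load_bounds beta r S Hb ltac:(eapply Rle_trans; [apply Rmax_l|exact Hr]) ltac:(lra))
    as [K1 K2].
  destruct (limit_load_bounds beta Hb) as [G1 G2].
  specialize (G1 S ltac:(lra)). specialize (G2 S ltac:(lra)).
  specialize (HR1 r ltac:(eapply Rle_trans; [apply Rmax_r|exact Hr])).
  apply Rabs_def2 in HR1 as [HR1 HR1'].
  fold C in K2, G2. apply Rabs_def1; lra.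
Qed.

(* Along r_m = sqrt(m a), l = r_m^2 and n_m = r_m^2 + beta r_m. *)
Lemma critical_load_cv a beta : 0 < a -> 0 < beta ->
  Un_cv (fun m => erlang_load (staffing a beta m) (INR m * a)) (limit_load beta).
Proof.
  intros Ha Hb eps Heps.
  destruct (rescaled_load_cv beta eps Hb Heps) as [R0 [HR0 HR]].
  destruct (eventually_ge (R0 * R0 / a)) as [N HN].
  exists N. intros m Hm. specialize (HN m Hm). unfold staffing, Rdist.
  set (M := INR m) in *.
  assert (HMa : R0 * R0 <= M * a).
  { apply Rmult_le_compat_r with (r := a) in HN; [|lra].
    replace (R0 * R0 / a * a) with (R0 * R0) in HN by (field; lra). lra. }
  set (r := sqrt (M * a)).
  assert (Hrr : M * a = r * r) by (symmetry; apply sqrt_sqrt; nra).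
  rewrite Hrr. apply HR.
  unfold r. rewrite <- (sqrt_square R0) by lra. apply sqrt_le_1_alt. lra.
Qed.

Lemma critical_alpha_cv a beta : 0 < a -> 0 < beta ->
  exists L, 0 < L < 1 /\ Un_cv (fun m => alpha_bar (staffing a beta m) (INR m * a)) L.
Proof.
  intros Ha Hb. pose proof (limit_load_gt1 beta Hb) as HL.
  exists (/ limit_load beta). split.
  - split; [apply Rinv_0_lt_compat; lra|]. rewrite <- Rinv_1. apply Rinv_lt_contravar; lra.
  - apply (min_inv_cv (fun m => erlang_load (staffing a beta m) (INR m * a))); auto.
    apply critical_load_cv; auto.
Qed.

Lemma overloaded_alpha_cv a b beta : 0 < a -> a < b -> 0 < beta ->
  Un_cv (fun m => alpha_bar (staffing a beta m) (INR m * b)) 1.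
Proof.
  intros. apply (min_inv_cv_one (fun m => erlang_load (staffing a beta m) (INR m * b))).
  apply overloaded_load_le_one; auto.
Qed.

Lemma underloaded_alpha_cv a b beta : 0 < b -> b < a -> 0 < beta ->
  Un_cv (fun m => alpha_bar (staffing a beta m) (INR m * b)) 0.
Proof.
  intros. apply (min_inv_cv_zero (fun m => erlang_load (staffing a beta m) (INR m * b))).
  apply underloaded_load_infty; auto.
Qed.

Theorem corollary1
  (Omega : Type) (Omega_enum : list Omega) (Omega_fin : forall w, In w Omega_enum)
  (Lambda0 : Omega -> R) (Lambda0_pos : forall w, 0 < Lambda0 w)
  (beta : R) (beta_pos : 0 < beta) (wkey : Omega) :
  let Lambda := fun (m : nat) (w : Omega) => INR m * Lambda0 w in
  let n := fun m : nat => Lambda m wkey + beta * sqrt (Lambda m wkey) in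
  (exists L, 0 < L < 1 /\ Un_cv (fun m => alpha_bar (n m) (Lambda m wkey)) L) /\
  (forall w, Lambda0 w > Lambda0 wkey ->
     Un_cv (fun m => alpha_bar (n m) (Lambda m w)) 1) /\
  (forall w, Lambda0 w < Lambda0 wkey ->
     Un_cv (fun m => alpha_bar (n m) (Lambda m w)) 0).
Proof.
  intros Lambda n. split; [|split].
  - exact (critical_alpha_cv (Lambda0 wkey) beta (Lambda0_pos wkey) beta_pos).
  - intros w Hw. exact (overloaded_alpha_cv _ _ beta (Lambda0_pos wkey) Hw beta_pos).
  - intros w Hw. exact (underloaded_alpha_cv _ _ beta (Lambda0_pos w) Hw beta_pos).
Qed.
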